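(* For every positive integer $c\equiv3\pmod4$ there exists an $\mathrm{IHS}(7,7;c)$.
   Context: An integer Heffter array set $\mathrm{IHS}(m,n;c)$ is a collection of $c$ completely filled $m\times n$ arrays with integer entries such that the absolute values of all $mnc$ entries (taken over all $c$ arrays) are exactly $1,2,\ldots,mnc$, each occurring exactly once, and in every array the entries of each row and of each column sum to $0$. *)

From mathcomp Require Import all_boot all_order all_algebra.
Set Implicit Arguments. Unset Strict Implicit. Unset Printing Implicit Defensive.
Import Order.TTheory GRing.Theory Num.Theory.

Definition is_IHS (m n c : nat) (A : 'I_c -> 'M[int]_(m, n)) : Prop :=
  [/\ perm_eq [seq `|A t.1 t.2.1 t.2.2|%N | t : 'I_c * ('I_m * 'I_n)]
              (iota 1 (m * n * c)),
      (forall k i, (\sum_(j < n) A k i j = 0)%R) &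
      (forall k j, (\sum_(i < m) A k i j = 0)%R)].

Definition IHS_exists (m n c : nat) : Prop :=
  exists A : 'I_c -> 'M[int]_(m, n), is_IHS A.

From mathcomp Require Import all_boot all_order all_algebra.
From mathcomp Require Import zify.
Set Implicit Arguments. Unset Strict Implicit. Unset Printing Implicit Defensive.
Import GRing.Theory.

(* Write c = 4k + 3 and cut [1, 49c] into 49 consecutive blocks of length c.
   Cell (i, j) of every array draws its absolute value from block [block i j],
   at a position [offset r ty u k] inside the block that depends on the role
   r = [role i j] of the cell (the role matrix is circulant) and on the array:
   the 4k generic arrays t = 4u + ty (ty < 4, u < k) and the three special
   arrays t = 4k + ty - 4 (4 <= ty < 7).  For each role these c positions are
   exactly [0, c), so the 49c absolute values are 1, ..., 49c.  The sign of an
   entry depends only on ty and the role, and with these signs every row and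
   column sum vanishes identically in k and u. *)

Lemma perm_iota_inj (T : finType) (f : T -> nat) N :
  injective f -> (forall x, 0 < f x <= N) -> #|T| = N ->
  perm_eq [seq f x | x : T] (iota 1 N).
Proof.
move=> f_inj f_range cardT.
have f_uniq : uniq [seq f x | x : T] by rewrite map_inj_uniq ?enum_uniq.
have sub_iota : {subset [seq f x | x : T] <= iota 1 N}.
  by move=> _ /mapP[x _ ->]; rewrite mem_iota; have := f_range x; lia.
have size_iota_le : size (iota 1 N) <= size [seq f x | x : T].
  by rewrite size_iota size_map -cardE cardT.
have [_ eq_iota] := uniq_min_size f_uniq sub_iota size_iota_le.
by apply: uniq_perm; rewrite ?iota_uniq.
Qed.

Lemma mulnD_lt_inj d a b a' b' :
  b < d -> b' < d -> a * d + b = a' * d + b' -> a = a' /\ b = b'.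
Proof.
move=> lt_b lt_b' E.
have divE x y : y < d -> (x * d + y) %/ d = x.
  by move=> lt_y; rewrite divnMDl ?divn_small ?addn0 //; lia.
have Ea : a = a' by rewrite -(divE a b) // E divE.
by split=> //; move: E; rewrite Ea => /addnI.
Qed.

Section BlockLayout.

Variables (m n c : nat).
Variable block : 'I_m -> 'I_n -> nat.
Variable offset : 'I_m -> 'I_n -> 'I_c -> nat.
Hypothesis block_inj : forall i j i' j', block i j = block i' j' -> i = i' /\ j = j'.
Hypothesis block_lt : forall i j, block i j < m * n.
Hypothesis offset_lt : forall i j t, offset i j t < c.
Hypothesis offset_inj : forall i j, injective (offset i j).

Lemma perm_block_layout :
  perm_eq [seq c * block x.2.1 x.2.2 + offset x.2.1 x.2.2 x.1 + 1
             | x : 'I_c * ('I_m * 'I_n)]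
          (iota 1 (m * n * c)).
Proof.
apply: perm_iota_inj; last by rewrite !card_prod !card_ord mulnC.
- move=> [t [i j]] [t' [i' j']] /= /addIn; rewrite !(mulnC c).
  by case/mulnD_lt_inj => // /block_inj[-> ->] /offset_inj ->.
- move=> [t [i j]] /=; have := block_lt i j; have := offset_lt i j t; nia.
Qed.

End BlockLayout.

Definition blockT : seq (seq nat) :=
  [:: [:: 25; 27; 37; 30;  9; 16;  2];
      [:: 20; 22; 42; 14; 10; 24; 28];
      [::  4;  5; 36; 41;  8; 21; 17];
      [:: 18; 31;  6; 38; 44; 13;  0];
      [:: 40; 48; 19;  3; 43; 46; 11];
      [:: 26; 32; 29; 23;  1; 34; 35];
      [:: 45; 15; 47; 39;  7; 12; 33]].

Definition block (i j : nat) : nat := nth 0 (nth [::] blockT i) j.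

Definition role (i j : nat) : nat :=
  nth 0 [:: 1; 2; 4; 6; 3; 5; 0] ((j + 7 - i) %% 7).

Definition sgnT : seq (seq bool) :=
  [:: [:: true; true; false; false; false; true; true];
      [:: true; true; false; false; false; true; true];
      [:: true; true; false; false; false; true; true];
      [:: true; true; false;  true;  true; false; false];
      [:: true; true; false; false; false; true; true];
      [:: true; true; false;  true;  true; false; false];
      [:: true; true; false; false; false; true; true]].

Definition sgn (ty r : nat) : int :=
  if nth false (nth [::] sgnT ty) r then 1%R else (-1)%R.

(* Generic entries (ty < 4) use truncated subtraction and are only meaningful
   for u < k; special entries (ty >= 4) ignore u. *)
Definition offset (r ty u k : nat) : nat :=
  match r, ty with
  | 0, 0 => k + 1 + u     | 0, 1 => 2 * k + 1 + u | 0, 2 => k - u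
  | 0, 3 => 4 * k + 1 - u | 0, 4 => 0             | 0, 5 => 4 * k + 2
  | 0, 6 => 3 * k + 1
  | 1, 0 => 2 * k + 2 + u | 1, 1 => k - 1 - u     | 1, 2 => k + u
  | 1, 3 => 3 * k + 2 + u | 1, 4 => 2 * k + 1     | 1, 5 => 4 * k + 2
  | 1, 6 => 2 * k
  | 2, 0 => 2 * u + 2     | 2, 1 => 2 * u + 1     | 2, 2 => 4 * k - 1 - 2 * u
  | 2, 3 => 4 * k - 2 * u | 2, 4 => 0             | 2, 5 => 4 * k + 2
  | 2, 6 => 4 * k + 1
  | 3, 0 => 2 * k - 1 - u | 3, 1 => 3 * k - 1 - u | 3, 2 => 3 * k + 1 + u
  | 3, 3 => k - 1 - u     | 3, 4 => 4 * k + 1     | 3, 5 => 3 * k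
  | 3, 6 => 4 * k + 2
  | 4, 0 => 2 * k + 3 + u | 4, 1 => 4 * k + 2 - u | 4, 2 => k + 1 - u
  | 4, 3 => 2 * k + 1 - u | 4, 4 => 2 * k + 2     | 4, 5 => 0
  | 4, 6 => 1
  | 5, 0 => k - 1 - u     | 5, 1 => 2 * k + u     | 5, 2 => 2 * k - 1 - u
  | 5, 3 => 4 * k + 2 - u | 5, 4 => 3 * k         | 5, 5 => 3 * k + 1
  | 5, 6 => 3 * k + 2
  | 6, 0 => u + 1         | 6, 1 => 2 * k + 1 - u | 6, 2 => 4 * k + 1 - u
  | 6, 3 => 2 * k + 2 + u | 6, 4 => k + 1         | 6, 5 => 4 * k + 2
  | 6, 6 => 0
  | _, _ => 0
  end.

Definition entry (k ty u i j : nat) : int :=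
  (sgn ty (role i j) * Posz ((4 * k + 3) * block i j + offset (role i j) ty u k + 1))%R.

Lemma entry_row_sum k ty u i : ty < 7 -> (ty < 4 -> u < k) -> i < 7 ->
  (\sum_(j < 7) entry k ty u i j = 0)%R.
Proof.
move=> lt_ty lt_u lt_i; rewrite !big_ord_recr big_ord0 /=.
do 7?[case: i lt_i => [|i] lt_i];
  do 7?[case: ty lt_ty lt_u => [|ty] lt_ty lt_u] => //;
  rewrite /entry /sgn /role /block /=; lia.
Qed.

Lemma entry_col_sum k ty u j : ty < 7 -> (ty < 4 -> u < k) -> j < 7 ->
  (\sum_(i < 7) entry k ty u i j = 0)%R.
Proof.
move=> lt_ty lt_u lt_j; rewrite !big_ord_recr big_ord0 /=.
do 7?[case: j lt_j => [|j] lt_j];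
  do 7?[case: ty lt_ty lt_u => [|ty] lt_ty lt_u] => //;
  rewrite /entry /sgn /role /block /=; lia.
Qed.

Lemma offset_lt r ty u k : r < 7 -> ty < 7 -> (ty < 4 -> u < k) ->
  offset r ty u k < 4 * k + 3.
Proof.
move=> lt_r lt_ty lt_u.
by do 7?[case: r lt_r => [|r] lt_r];
  do 7?[case: ty lt_ty lt_u => [|ty] lt_ty lt_u] => //=; lia.
Qed.

Lemma offset_inj r k ty u ty' u' : r < 7 -> ty < 7 -> ty' < 7 ->
  (ty < 4 -> u < k) -> (ty' < 4 -> u' < k) ->
  offset r ty u k = offset r ty' u' k -> ty = ty' /\ (ty < 4 -> u = u').
Proof.
move=> lt_r lt_ty lt_ty' lt_u lt_u'.
do 7?[case: r lt_r => [|r] lt_r]; do 7?[case: ty lt_ty lt_u => [|ty] lt_ty lt_u];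
  do 7?[case: ty' lt_ty' lt_u' => [|ty'] lt_ty' lt_u'] => //=; lia.
Qed.

Lemma block_lt i j : i < 7 -> j < 7 -> block i j < 7 * 7.
Proof.
by move=> lt_i lt_j; do 7?[case: i lt_i => [|i] lt_i]; do 7?[case: j lt_j => [|j] lt_j].
Qed.

Lemma index_block i j : i < 7 -> j < 7 ->
  index (block i j) (flatten blockT) = i * 7 + j.
Proof.
by move=> lt_i lt_j; do 7?[case: i lt_i => [|i] lt_i]; do 7?[case: j lt_j => [|j] lt_j].
Qed.

Lemma block_inj i j i' j' : i < 7 -> j < 7 -> i' < 7 -> j' < 7 ->
  block i j = block i' j' -> i = i' /\ j = j'.
Proof.
move=> lt_i lt_j lt_i' lt_j' /(congr1 (index^~ (flatten blockT))).
by rewrite !index_block // => /mulnD_lt_inj; apply.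
Qed.

Lemma role_lt i j : i < 7 -> j < 7 -> role i j < 7.
Proof.
by move=> lt_i lt_j; do 7?[case: i lt_i => [|i] lt_i]; do 7?[case: j lt_j => [|j] lt_j].
Qed.

Lemma absz_sgnM ty r v : `|(sgn ty r * Posz v)%R|%N = v.
Proof. by rewrite /sgn; case: ifP; rewrite ?mul1r ?mulN1r ?abszN. Qed.

Definition array_type (k t : nat) : nat :=
  if t < 4 * k then t %% 4 else t - 4 * k + 4.

Lemma array_type_lt k t : t < 4 * k + 3 -> array_type k t < 7.
Proof. by rewrite /array_type; case: ifP; lia. Qed.

Lemma array_param_lt k t : array_type k t < 4 -> t %/ 4 < k.
Proof. by rewrite /array_type; case: ifP; lia. Qed.

Lemma array_type_inj k t t' : array_type k t = array_type k t' ->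
  (array_type k t < 4 -> t %/ 4 = t' %/ 4) -> t = t'.
Proof. by rewrite /array_type; case: ifP; case: ifP; lia. Qed.

Definition heffter (k t i j : nat) : int := entry k (array_type k t) (t %/ 4) i j.

Definition heffter_offset (k t i j : nat) : nat :=
  offset (role i j) (array_type k t) (t %/ 4) k.

Lemma absz_heffter k t i j :
  `|heffter k t i j|%N = (4 * k + 3) * block i j + heffter_offset k t i j + 1.
Proof. exact: absz_sgnM. Qed.

Section HeffterArrays.

Variables (k t : nat).
Hypothesis lt_t : t < 4 * k + 3.

Let lt_type : array_type k t < 7. Proof. exact: array_type_lt. Qed.
Let lt_param : array_type k t < 4 -> t %/ 4 < k. Proof. exact: array_param_lt. Qed.

Lemma heffter_row_sum i : i < 7 -> (\sum_(j < 7) heffter k t i j = 0)%R.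
Proof. exact: entry_row_sum. Qed.

Lemma heffter_col_sum j : j < 7 -> (\sum_(i < 7) heffter k t i j = 0)%R.
Proof. exact: entry_col_sum. Qed.

Lemma heffter_offset_lt i j : i < 7 -> j < 7 -> heffter_offset k t i j < 4 * k + 3.
Proof. by move=> lt_i lt_j; apply: offset_lt; rewrite ?role_lt. Qed.

Lemma heffter_offset_inj t' i j : i < 7 -> j < 7 -> t' < 4 * k + 3 ->
  heffter_offset k t i j = heffter_offset k t' i j -> t = t'.
Proof.
move=> lt_i lt_j lt_t' /offset_inj[]; rewrite ?role_lt ?array_type_lt //.
  exact: array_param_lt.
exact: array_type_inj.
Qed.

End HeffterArrays.

Theorem proposition3p6 (c : nat) : 0 < c -> c %% 4 = 3 -> IHS_exists 7 7 c.
Proof.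
move=> _ c_mod4; set k := c %/ 4.
have c_eq : c = 4 * k + 3 by rewrite {1}(divn_eq c 4) c_mod4 /k; lia.
have lt_c (x : 'I_c) : x < 4 * k + 3 by rewrite -c_eq.
exists (fun t => \matrix_(i, j) heffter k t i j)%R; split.
- pose off (i j : 'I_7) (t : 'I_c) := heffter_offset k t i j.
  have -> : [seq `|(\matrix_(i, j) heffter k x.1 i j)%R x.2.1 x.2.2|%N
               | x : 'I_c * ('I_7 * 'I_7)]
          = [seq c * block x.2.1 x.2.2 + off x.2.1 x.2.2 x.1 + 1
               | x : 'I_c * ('I_7 * 'I_7)].
    by apply: eq_map => -[t [i j]]; rewrite /= mxE absz_heffter -c_eq.
  apply: (@perm_block_layout 7 7 c (fun i j => block i j) off)
    => [i j i' j'|i j|i j t|i j t t'].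
  + by case/block_inj => // /val_inj -> /val_inj ->.
  + exact: block_lt (ltn_ord i) (ltn_ord j).
  + by rewrite c_eq heffter_offset_lt.
  + by move/heffter_offset_inj => eq_t; apply/val_inj/eq_t.
- by move=> t i; under eq_bigr do rewrite mxE; apply: heffter_row_sum.
- by move=> t j; under eq_bigr do rewrite mxE; apply: heffter_col_sum.
Qed.
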